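(* Let $J\subset(0,\infty)$ be an open interval and let $u:J\to\mathbb{R}$ be a smooth function with $u'(\alpha)\neq 0$ for all $\alpha\in J$. The rotational surface in $(\mathbb{R}^3,\|\cdot\|)$ given by $\bar f(\alpha,v)=(\alpha\cos v,\ \alpha\sin v,\ u(\alpha))$ is minimal if and only if there are constants $c_2>0$ and $c_3\in\mathbb{R}$ and a fixed choice of sign such that $J\subset(c_2,\infty)$ and $$u(\alpha)=\pm\int_{c_2}^{\alpha}\frac{c_2^{2m-1}}{\left(\rho^{2m}-c_2^{2m}\right)^{\frac{2m-1}{2m}}}\,d\rho+c_3\qquad(\alpha\in J).$$
   Context: Fix an integer $m\ge 2$. Let $\Phi(x_1,x_2,x_3)=(x_1^2+x_2^2)^m+x_3^{2m}$ and let $\|\cdot\|$ be the norm on $\mathbb{R}^3$ whose unit sphere is $S=\{x\in\mathbb{R}^3:\Phi(x)=1\}$ (a smooth, strictly convex surface). For a surface given by a parametrization $f(s,v)$, its Birkhoff–Gauss map $\eta$ is the map into $S$ defined by requiring $\eta\in S$ and $\nabla\Phi(\eta)=\mu\, f_s\times f_v$ for some function $\mu>0$, where $\times$ is the standard cross product (so the tangent plane of $S$ at $\eta(p)$ is parallel to $T_pM$, and $d\eta_p$ is an endomorphism of $T_pM$). The Minkowski mean curvature is $H=\tfrac12\operatorname{trace}(d\eta_p)$, and the surface is minimal if $H\equiv 0$ (this condition does not depend on the orientation). *)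

From Stdlib Require Import Reals Lra.
From Coquelicot Require Import Coquelicot.
Open Scope R_scope.

Record V3 := mkV { c1 : R; c2 : R; c3 : R }.

Definition vadd (x y : V3) : V3 := mkV (c1 x + c1 y) (c2 x + c2 y) (c3 x + c3 y).
Definition vscale (a : R) (x : V3) : V3 := mkV (a * c1 x) (a * c2 x) (a * c3 x).
Definition cross (x y : V3) : V3 :=
  mkV (c2 x * c3 y - c3 x * c2 y)
      (c3 x * c1 y - c1 x * c3 y)
      (c1 x * c2 y - c2 x * c1 y).

(* Phi(x) = (x1^2 + x2^2)^m + x3^(2m); its unit level set is the unit sphere
   of the norm. *)
Definition Phi (m : nat) (x : V3) : R :=
  (c1 x ^ 2 + c2 x ^ 2) ^ m + c3 x ^ (2 * m).

Definition gradPhi (m : nat) (x : V3) : V3 :=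
  mkV (Derive (fun t => Phi m (mkV t (c2 x) (c3 x))) (c1 x))
      (Derive (fun t => Phi m (mkV (c1 x) t (c3 x))) (c2 x))
      (Derive (fun t => Phi m (mkV (c1 x) (c2 x) t)) (c3 x)).

Definition partial_s (F : R -> R -> V3) (s v : R) : V3 :=
  mkV (Derive (fun t => c1 (F t v)) s)
      (Derive (fun t => c2 (F t v)) s)
      (Derive (fun t => c3 (F t v)) s).
Definition partial_v (F : R -> R -> V3) (s v : R) : V3 :=
  mkV (Derive (fun t => c1 (F s t)) v)
      (Derive (fun t => c2 (F s t)) v)
      (Derive (fun t => c3 (F s t)) v).

Definition has_partials (F : R -> R -> V3) (s v : R) : Prop :=
  ex_derive (fun t => c1 (F t v)) s /\ ex_derive (fun t => c2 (F t v)) s /\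
  ex_derive (fun t => c3 (F t v)) s /\
  ex_derive (fun t => c1 (F s t)) v /\ ex_derive (fun t => c2 (F s t)) v /\
  ex_derive (fun t => c3 (F s t)) v.

Definition is_BG_map (m : nat) (f : R -> R -> V3) (D : R -> R -> Prop)
  (eta : R -> R -> V3) : Prop :=
  forall s v, D s v ->
    Phi m (eta s v) = 1 /\
    exists mu, 0 < mu /\
      gradPhi m (eta s v) = vscale mu (cross (partial_s f s v) (partial_v f s v)).

(* Minkowski mean curvature vanishes at (s,v): d eta_p is the endomorphism of
   T_pM = span(f_s, f_v) with eta_s = a f_s + b f_v, eta_v = c f_s + d f_v,
   and H = trace/2 = (a + d)/2 = 0. *)
Definition mean_curv_zero_at (f eta : R -> R -> V3) (s v : R) : Prop :=
  has_partials eta s v /\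
  exists a b c d : R,
    partial_s eta s v = vadd (vscale a (partial_s f s v)) (vscale b (partial_v f s v)) /\
    partial_v eta s v = vadd (vscale c (partial_s f s v)) (vscale d (partial_v f s v)) /\
    (a + d) / 2 = 0.

Definition BG_minimal (m : nat) (f : R -> R -> V3) (D : R -> R -> Prop) : Prop :=
  forall eta, is_BG_map m f D eta ->
    forall s v, D s v -> mean_curv_zero_at f eta s v.

Definition rot_surface (u : R -> R) (alpha v : R) : V3 :=
  mkV (alpha * cos v) (alpha * sin v) (u alpha).

Definition integrand (m : nat) (c rho : R) : R :=
  c ^ (2 * m - 1) /
  Rpower (rho ^ (2 * m) - c ^ (2 * m)) ((INR (2 * m) - 1) / INR (2 * m)).

(* Along the surface of revolution the normal is (-u' cos v, -u' sin v, 1) up to a positive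
   factor, so its Birkhoff-Gauss map is forced to be eta(alpha, v) = (T cos v, T sin v, Z), where
   (T, Z) is the point of the curve T^(2m) + Z^(2m) = 1, Z > 0, at which the gradient of that curve
   is parallel to (-u'(alpha), 1). Differentiating the curve equation gives Z' = u' T', so in the
   basis (f_alpha, f_v) the endomorphism d eta is diagonal with entries T' and T/alpha; hence H = 0
   is the equation (alpha T)' = 0, i.e. T = -sigma k / alpha. Solving the gradient condition for u'
   then yields u' = sigma k^(2m-1) / (alpha^(2m) - k^(2m))^((2m-1)/(2m)), and |T| < 1 forces
   k < alpha. The improper integral of this slope is evaluated through the substitution
   rho^(2m) = r^(2m) + k^(2m), which turns it into a proper integral of a bounded continuous
   function. *)

From Stdlib Require Import Reals Lra Lia.
From Coquelicot Require Import Coquelicot.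
Open Scope R_scope.

(** * Elementary facts on powers and angles *)

Lemma pow_lt_compat_nonneg n x y : 0 <= x < y -> x ^ S n < y ^ S n.
Proof.
intros [hx hxy]; induction n as [|n IH]; [simpl; lra|].
change (x * x ^ S n < y * y ^ S n).
assert (0 <= x ^ S n) by (apply pow_le; lra).
apply Rle_lt_trans with (x * y ^ S n).
- apply Rmult_le_compat_l; lra.
- apply Rmult_lt_compat_r; [apply pow_lt|]; lra.
Qed.

Lemma pow_inj_pos n x y : 0 < x -> 0 < y -> x ^ S n = y ^ S n -> x = y.
Proof.
intros hx hy hxy; destruct (Rtotal_order x y) as [h|[h|h]]; trivial.
- pose proof (pow_lt_compat_nonneg n x y); lra.
- pose proof (pow_lt_compat_nonneg n y x); lra.
Qed.

Lemma pow_even_nonneg n x : 0 <= x ^ (2 * n).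
Proof. rewrite pow_mult; apply pow_le; nra. Qed.

Lemma pow_even_sign n sg : sg = 1 \/ sg = -1 -> sg ^ (2 * n) = 1.
Proof.
intros [-> | ->]; rewrite pow_mult; replace (_ ^ 2) with 1 by ring; apply pow1.
Qed.

Lemma pow_odd_opp k x : (- x) ^ (2 * k + 1) = - x ^ (2 * k + 1).
Proof.
replace (- x) with ((-1) * x) by ring.
rewrite Rpow_mult_distr, pow_add, pow_even_sign by auto; ring.
Qed.

Lemma pow_odd_lt k x y : x < y -> x ^ (2 * k + 1) < y ^ (2 * k + 1).
Proof.
replace (2 * k + 1)%nat with (S (2 * k)) by lia; intros hxy.
assert (hneg : forall z, z < 0 -> z ^ S (2 * k) < 0).
{ intros z hz; rewrite <- (Ropp_involutive z).
  replace (S (2 * k)) with (2 * k + 1)%nat by lia; rewrite pow_odd_opp.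
  pose proof (pow_lt (- z) (2 * k + 1)); lra. }
destruct (Rle_dec 0 x) as [hx|hx]; [apply pow_lt_compat_nonneg; lra|].
destruct (Rle_dec 0 y) as [hy|hy].
- pose proof (hneg x); pose proof (pow_le y (S (2 * k)) hy); lra.
- pose proof (pow_lt_compat_nonneg (2 * k) (- y) (- x)).
  replace (S (2 * k)) with (2 * k + 1)%nat in * by lia.
  rewrite !pow_odd_opp in *; lra.
Qed.

Lemma pow_odd_inj k x y : x ^ (2 * k + 1) = y ^ (2 * k + 1) -> x = y.
Proof.
intros hxy; destruct (Rtotal_order x y) as [h|[h|h]]; trivial;
  apply (pow_odd_lt k) in h; lra.
Qed.

Lemma pow_odd_pos k x : 0 < x ^ (2 * k + 1) -> 0 < x.
Proof.
intros h; destruct (Rlt_dec 0 x) as [|hx]; trivial.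
destruct (Req_dec x 0) as [->|]; [rewrite pow_i in h by lia; lra|].
pose proof (pow_odd_lt k x 0); rewrite pow_i in * by lia; lra.
Qed.

Lemma pow_odd_sign k sg : sg = 1 \/ sg = -1 -> sg ^ (2 * k + 1) = sg.
Proof. intros hsg; rewrite pow_add, pow_even_sign by trivial; ring. Qed.

Lemma pow_sq_pred m T : (1 <= m)%nat -> (T ^ 2) ^ pred m * T = T ^ (2 * m - 1).
Proof.
intros hm; rewrite <- pow_mult; rewrite <- (pow_1 T) at 2; rewrite <- pow_add; f_equal; lia.
Qed.

Lemma sq_cos_sin T v : (T * cos v) ^ 2 + (T * sin v) ^ 2 = T ^ 2.
Proof.
pose proof (sin2_cos2 v) as h; unfold Rsqr in h.
transitivity (T ^ 2 * (sin v * sin v + cos v * cos v)); [|rewrite h]; ring.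
Qed.

Lemma cos_sin_inj x y v : x * cos v = y * cos v -> x * sin v = y * sin v -> x = y.
Proof.
intros hc hs; pose proof (sin2_cos2 v) as h; unfold Rsqr in h.
transitivity (x * (sin v * sin v + cos v * cos v)); [rewrite h; ring|].
transitivity (y * (sin v * sin v + cos v * cos v)); [|rewrite h; ring].
replace (x * _) with ((x * sin v) * sin v + (x * cos v) * cos v) by ring.
rewrite hc, hs; ring.
Qed.

(** * The profile curve T^(2m) + Z^(2m) = 1 *)

(* [(T, Z)] is the point of the upper half of the curve where its gradient is parallel to
   [(-p, 1)]; for the profile slope [p = u' s] the Birkhoff-Gauss map is [(T cos v, T sin v, Z)]. *)
Definition BG_profile (m : nat) (p T Z : R) : Prop :=
  T ^ (2 * m) + Z ^ (2 * m) = 1 /\ T ^ (2 * m - 1) = - Z ^ (2 * m - 1) * p /\ 0 < Z.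

(* The real (2m-1)-th root of [p], written so as to be smooth away from [0]. *)
Definition odd_root (m : nat) (p : R) : R :=
  p * Rpower (p ^ 2) (- INR (m - 1) / INR (2 * m - 1)).

Definition BG_Z (m : nat) (p : R) : R := Rpower (1 + odd_root m p ^ (2 * m)) (- / INR (2 * m)).

Definition BG_T (m : nat) (p : R) : R := - odd_root m p * BG_Z m p.

Section Profile_curve.

Variable m : nat.
Hypothesis hm : (1 <= m)%nat.

Let odd_exp : (2 * m - 1 = 2 * (m - 1) + 1)%nat.
Proof. lia. Qed.

Let even_exp : (2 * m = S (2 * m - 1))%nat.
Proof. lia. Qed.

Lemma unit_curve_Z_unique T Z Z' :
  T ^ (2 * m) + Z ^ (2 * m) = 1 -> T ^ (2 * m) + Z' ^ (2 * m) = 1 ->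
  0 < Z -> 0 < Z' -> Z = Z'.
Proof.
intros h h' hZ hZ'; apply (pow_inj_pos (2 * m - 1)); trivial.
rewrite <- even_exp; lra.
Qed.

Lemma BG_profile_slope_unique p q T Z Z' :
  BG_profile m p T Z -> BG_profile m q T Z' -> p = q.
Proof.
intros [h1 [h2 hZ]] [h1' [h2' hZ']].
assert (Z' = Z) as -> by (apply (unit_curve_Z_unique T); trivial).
pose proof (pow_lt Z (2 * m - 1) hZ).
apply Rmult_eq_reg_l with (- Z ^ (2 * m - 1)); lra.
Qed.

Lemma BG_profile_unique p T Z T' Z' :
  BG_profile m p T Z -> BG_profile m p T' Z' -> T = T' /\ Z = Z'.
Proof.
intros [h1 [h2 hZ]] [h1' [h2' hZ']].
set (l := Z / Z').
assert (hl : 0 < l) by (apply Rdiv_lt_0_compat; trivial).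
assert (hZl : Z = l * Z') by (unfold l; field; lra).
assert (hT : T = l * T').
{ apply (pow_odd_inj (m - 1)); rewrite <- odd_exp, Rpow_mult_distr, h2, h2', hZl,
    Rpow_mult_distr; ring. }
assert (hl1 : l = 1).
{ apply (pow_inj_pos (2 * m - 1)); trivial; [lra|]; rewrite <- even_exp, pow1.
  rewrite hT, hZl, !Rpow_mult_distr in h1.
  transitivity (l ^ (2 * m) * (T' ^ (2 * m) + Z' ^ (2 * m))); [rewrite h1'|]; lra. }
rewrite hT, hZl, hl1; split; ring.
Qed.

Lemma BG_profile_abs_T_lt_1 p T Z : BG_profile m p T Z -> Rabs T < 1.
Proof.
intros [h1 [_ hZ]]; pose proof (pow_lt Z (2 * m) hZ).
destruct (Rlt_le_dec (Rabs T) 1) as [|hT]; trivial.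
pose proof (pow_incr 1 (Rabs T) (2 * m) (conj Rle_0_1 hT)).
rewrite pow1, RPow_abs, Rabs_pos_eq in * by apply pow_even_nonneg; lra.
Qed.

Lemma BG_profile_T_neq_0 p T Z : p <> 0 -> BG_profile m p T Z -> T <> 0.
Proof.
intros hp [_ [h2 hZ]] ->; rewrite pow_i in h2 by lia.
pose proof (pow_lt Z (2 * m - 1) hZ).
assert (Z ^ (2 * m - 1) * p = 0) as [|]%Rmult_integral by lra; lra.
Qed.

Lemma pow_odd_root p : p <> 0 -> odd_root m p ^ (2 * m - 1) = p.
Proof.
intros hp; assert (hp2 : 0 < p ^ 2) by (apply pow2_gt_0; trivial).
assert (hN : 0 < INR (2 * m - 1)) by (apply lt_0_INR; lia).
unfold odd_root; rewrite Rpow_mult_distr, <- (Rpower_pow _ (Rpower _ _))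
  by (unfold Rpower; apply exp_pos).
rewrite Rpower_mult.
replace (- INR (m - 1) / INR (2 * m - 1) * INR (2 * m - 1)) with (- INR (m - 1)) by (field; lra).
rewrite Rpower_Ropp, Rpower_pow, odd_exp, pow_add, pow_mult by trivial.
field; apply pow_nonzero; lra.
Qed.

Lemma BG_profile_BG_TZ p : p <> 0 -> BG_profile m p (BG_T m p) (BG_Z m p).
Proof.
intros hp; pose proof (pow_even_nonneg m (odd_root m p)) as hw.
assert (hn : 0 < INR (2 * m)) by (apply lt_0_INR; lia).
assert (hZ2m : BG_Z m p ^ (2 * m) = / (1 + odd_root m p ^ (2 * m))).
{ unfold BG_Z; rewrite <- Rpower_pow, Rpower_mult by (unfold Rpower; apply exp_pos).
  replace (_ * _) with (- (1)) by (field; lra).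
  rewrite Rpower_Ropp, Rpower_1 by lra; reflexivity. }
unfold BG_profile, BG_T; split; [|split].
- replace (- odd_root m p) with ((-1) * odd_root m p) by ring.
  rewrite !Rpow_mult_distr, pow_even_sign, hZ2m by auto; field; lra.
- replace (- odd_root m p) with ((-1) * odd_root m p) by ring.
  rewrite !Rpow_mult_distr, odd_exp, pow_add, pow_even_sign, <- odd_exp, pow_odd_root by auto.
  ring.
- unfold BG_Z, Rpower; apply exp_pos.
Qed.

Lemma ex_derive_BG_TZ p : p <> 0 -> ex_derive (BG_T m) p /\ ex_derive (BG_Z m) p.
Proof.
intros hp; assert (hp2 : 0 < p ^ 2) by (apply pow2_gt_0; trivial).
unfold BG_T, BG_Z, odd_root, Rpower; split; auto_derive; repeat split.
all: try (simpl in hp2; lra).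
all: match goal with |- 0 < 1 + ?w ^ _ => pose proof (pow_even_nonneg m w) end.
all: simpl in *; lra.
Qed.

End Profile_curve.

(** * The Birkhoff-Gauss map of a surface of revolution *)

Lemma gradPhi_eq m X : gradPhi m X =
  mkV (2 * INR m * (c1 X ^ 2 + c2 X ^ 2) ^ pred m * c1 X)
      (2 * INR m * (c1 X ^ 2 + c2 X ^ 2) ^ pred m * c2 X)
      (2 * INR m * c3 X ^ (2 * m - 1)).
Proof.
rewrite Nat.sub_1_r.
unfold gradPhi; f_equal; apply is_derive_unique; unfold Phi; simpl;
  auto_derive; trivial; rewrite ?plus_INR; simpl; ring.
Qed.

(* [is_BG_map m f D eta] unfolds to [forall s v, D s v -> BG_point m f s v (eta s v)]. *)
Definition BG_point (m : nat) (f : R -> R -> V3) (s v : R) (X : V3) : Prop :=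
  Phi m X = 1 /\
  exists mu, 0 < mu /\ gradPhi m X = vscale mu (cross (partial_s f s v) (partial_v f s v)).

Definition rot_map (T Z : R -> R) (s v : R) : V3 := mkV (T s * cos v) (T s * sin v) (Z s).

Lemma partial_s_rot_surface u s v :
  partial_s (rot_surface u) s v = mkV (cos v) (sin v) (Derive u s).
Proof.
unfold partial_s, rot_surface; simpl; f_equal; apply is_derive_unique; auto_derive;
  trivial; ring.
Qed.

Lemma partial_v_rot_surface u s v :
  partial_v (rot_surface u) s v = mkV (- s * sin v) (s * cos v) 0.
Proof.
unfold partial_v, rot_surface; simpl; f_equal; apply is_derive_unique; auto_derive;
  trivial; ring.
Qed.

Lemma cross_partials_rot_surface u s v :
  cross (partial_s (rot_surface u) s v) (partial_v (rot_surface u) s v) =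
  mkV (- Derive u s * s * cos v) (- Derive u s * s * sin v) s.
Proof.
rewrite partial_s_rot_surface, partial_v_rot_surface; unfold cross; simpl; f_equal;
  try ring.
pose proof (sin2_cos2 v) as h; unfold Rsqr in h.
transitivity (s * (sin v * sin v + cos v * cos v)); [|rewrite h]; ring.
Qed.

Section BG_point_rot_surface.

Variables (m : nat) (u : R -> R).
Hypothesis hm : (1 <= m)%nat.

Lemma BG_point_rot_surface_of_profile s v T Z : 0 < s -> BG_profile m (Derive u s) T Z ->
  BG_point m (rot_surface u) s v (mkV (T * cos v) (T * sin v) Z).
Proof.
intros hs [h1 [h2 hZ]].
assert (hn : 0 < INR m) by (apply lt_0_INR; lia).
split.
- unfold Phi; cbn [c1 c2 c3]; rewrite sq_cos_sin, <- pow_mult; trivial.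
- exists (2 * INR m * Z ^ (2 * m - 1) / s); split.
  + apply Rdiv_lt_0_compat; trivial; pose proof (pow_lt Z (2 * m - 1) hZ); nra.
  + rewrite gradPhi_eq, cross_partials_rot_surface; unfold vscale; cbn [c1 c2 c3].
    rewrite sq_cos_sin; rewrite <- (pow_sq_pred m T hm) in h2.
    f_equal; [transitivity (2 * INR m * ((T ^ 2) ^ pred m * T) * cos v)
             |transitivity (2 * INR m * ((T ^ 2) ^ pred m * T) * sin v)|];
      try ring; rewrite ?h2; field; lra.
Qed.

Lemma profile_of_BG_point_rot_surface s v X : 0 < s -> Derive u s <> 0 ->
  BG_point m (rot_surface u) s v X ->
  exists T Z, X = mkV (T * cos v) (T * sin v) Z /\ BG_profile m (Derive u s) T Z.
Proof.
destruct X as [x y z]; intros hs hp [hphi [mu [hmu hg]]].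
rewrite gradPhi_eq, cross_partials_rot_surface in hg; unfold vscale in hg; cbn [c1 c2 c3] in hg.
pose proof (f_equal c1 hg) as ex; pose proof (f_equal c2 hg) as ey.
pose proof (f_equal c3 hg) as ez; cbn [c1 c2 c3] in ex, ey, ez; clear hg.
unfold Phi in hphi; cbn [c1 c2 c3] in hphi.
assert (hn : 0 < INR m) by (apply lt_0_INR; lia).
set (p := Derive u s) in *; set (rho := x ^ 2 + y ^ 2) in *.
assert (hz : 0 < z).
{ apply (pow_odd_pos (m - 1)); replace (2 * (m - 1) + 1)%nat with (2 * m - 1)%nat by lia.
  apply Rmult_lt_reg_l with (2 * INR m); [lra|].
  rewrite Rmult_0_r, ez; apply Rmult_lt_0_compat; trivial. }
set (K := - z ^ (2 * m - 1) * p).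
assert (hK : K <> 0).
{ pose proof (pow_lt z (2 * m - 1) hz); unfold K; intros [h|]%Rmult_integral; lra. }
assert (hx : rho ^ pred m * x = K * cos v).
{ apply Rmult_eq_reg_l with (2 * INR m); [|lra].
  transitivity (mu * (- p * s * cos v)); [rewrite <- ex; ring|].
  transitivity (- p * cos v * (mu * s)); [|rewrite <- ez; unfold K]; ring. }
assert (hy : rho ^ pred m * y = K * sin v).
{ apply Rmult_eq_reg_l with (2 * INR m); [|lra].
  transitivity (mu * (- p * s * sin v)); [rewrite <- ey; ring|].
  transitivity (- p * sin v * (mu * s)); [|rewrite <- ez; unfold K]; ring. }
assert (hrho : rho ^ pred m <> 0).
{ intros h; rewrite h in hx, hy; pose proof (sin2_cos2 v) as hsc; unfold Rsqr in hsc.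
  assert (cos v = 0 /\ sin v = 0) as [hc hs'] by (split; apply Rmult_eq_reg_l with K; lra).
  rewrite hc, hs' in hsc; lra. }
set (T := K / rho ^ pred m).
assert (hxT : x = T * cos v) by (unfold T; field_simplify; [rewrite <- hx; field|]; trivial).
assert (hyT : y = T * sin v) by (unfold T; field_simplify; [rewrite <- hy; field|]; trivial).
assert (hrhoT : rho = T ^ 2) by (unfold rho; rewrite hxT, hyT; apply sq_cos_sin).
exists T, z; split; [rewrite <- hxT, <- hyT; reflexivity|]; split; [|split; trivial].
- rewrite <- hphi, pow_mult, <- hrhoT; reflexivity.
- rewrite <- (pow_sq_pred m T hm), <- hrhoT; unfold T, K; field; trivial.
Qed.

End BG_point_rot_surface.

Lemma partial_s_rot_map T Z s v :
  partial_s (rot_map T Z) s v = mkV (Derive T s * cos v) (Derive T s * sin v) (Derive Z s).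
Proof. unfold partial_s, rot_map; simpl; f_equal; apply Derive_scal_l. Qed.

Lemma partial_v_rot_map T Z s v :
  partial_v (rot_map T Z) s v = mkV (- T s * sin v) (T s * cos v) 0.
Proof.
unfold partial_v, rot_map; simpl; f_equal; apply is_derive_unique; auto_derive;
  trivial; ring.
Qed.

Lemma has_partials_rot_map T Z s v :
  ex_derive T s -> ex_derive Z s -> has_partials (rot_map T Z) s v.
Proof.
intros hT hZ; unfold has_partials, rot_map; simpl; repeat split; auto_derive; auto.
Qed.

Lemma mean_curv_zero_at_ext_loc f eta eta' s v :
  locally s (fun r => forall w, eta r w = eta' r w) ->
  mean_curv_zero_at f eta s v -> mean_curv_zero_at f eta' s v.
Proof.
unfold mean_curv_zero_at; intros heq [hpart habcd].
assert (heq_s : forall g : V3 -> R, locally s (fun r => g (eta r v) = g (eta' r v)))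
  by (intros g; apply (filter_imp _ _ (fun r h => f_equal g (h v)) heq)).
assert (heq_v : forall w, eta s w = eta' s w) by apply (locally_singleton _ _ heq).
replace (partial_s eta' s v) with (partial_s eta s v)
  by (unfold partial_s; f_equal; apply Derive_ext_loc, heq_s).
replace (partial_v eta' s v) with (partial_v eta s v)
  by (unfold partial_v; f_equal; apply Derive_ext; intros w; rewrite heq_v; reflexivity).
split; trivial.
destruct hpart as [h1 [h2 [h3 [h4 [h5 h6]]]]].
repeat split.
- exact (ex_derive_ext_loc _ _ _ (heq_s c1) h1).
- exact (ex_derive_ext_loc _ _ _ (heq_s c2) h2).
- exact (ex_derive_ext_loc _ _ _ (heq_s c3) h3).
- exact (ex_derive_ext _ _ _ (fun w => f_equal c1 (heq_v w)) h4).
- exact (ex_derive_ext _ _ _ (fun w => f_equal c2 (heq_v w)) h5).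
- exact (ex_derive_ext _ _ _ (fun w => f_equal c3 (heq_v w)) h6).
Qed.

Lemma mean_curv_zero_at_rot_map u T Z s v :
  0 < s -> Derive u s <> 0 -> ex_derive T s -> ex_derive Z s ->
  Derive Z s = Derive u s * Derive T s ->
  mean_curv_zero_at (rot_surface u) (rot_map T Z) s v <-> Derive T s + T s / s = 0.
Proof.
intros hs hp hT hZ hZT.
unfold mean_curv_zero_at; rewrite partial_s_rot_map, partial_v_rot_map,
  partial_s_rot_surface, partial_v_rot_surface.
split.
- intros [_ [a [b [c [d [e1 [e2 e3]]]]]]]; unfold vadd, vscale in e1, e2.
  injection e1 as _ _ e13; injection e2 as e21 e22 e23.
  assert (a = Derive T s) as -> by (apply Rmult_eq_reg_r with (Derive u s); lra).
  assert (c = 0) as -> by (apply Rmult_eq_reg_r with (Derive u s); lra).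
  assert (hd : T s = d * s) by (apply (cos_sin_inj _ _ v); lra).
  rewrite hd; field_simplify; lra.
- intros h; split; [apply has_partials_rot_map; trivial|].
  exists (Derive T s), 0, 0, (T s / s); unfold vadd, vscale; simpl.
  split; [|split]; [f_equal; try rewrite hZT; ring|f_equal; field; lra|lra].
Qed.

Lemma Derive_BG_profile m p T Z s : (1 <= m)%nat ->
  locally s (fun r => T r ^ (2 * m) + Z r ^ (2 * m) = 1) ->
  ex_derive T s -> ex_derive Z s -> BG_profile m p (T s) (Z s) ->
  Derive Z s = p * Derive T s.
Proof.
intros hm hloc hT hZ [_ [hTZ hZpos]].
assert (hd : Derive (fun r => T r ^ (2 * m) + Z r ^ (2 * m)) s =
  INR (2 * m) * (T s ^ (2 * m - 1) * Derive T s + Z s ^ (2 * m - 1) * Derive Z s)).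
{ rewrite Nat.sub_1_r; apply is_derive_unique; auto_derive; auto; simpl.
  change (fun x : R => T x) with T; change (fun x : R => Z x) with Z; ring. }
assert (h0 : Derive (fun r => T r ^ (2 * m) + Z r ^ (2 * m)) s = 0)
  by (erewrite Derive_ext_loc; [apply Derive_const|exact hloc]).
rewrite hd, hTZ in h0.
assert (hn : 0 < INR (2 * m)) by (apply lt_0_INR; lia).
pose proof (pow_lt (Z s) (2 * m - 1) hZpos).
assert (Z s ^ (2 * m - 1) * (Derive Z s - p * Derive T s) = 0) as [|]%Rmult_integral
  by nra; lra.
Qed.

Section Rotational_minimal.

Variables (m : nat) (a : R) (b : Rbar) (u : R -> R).
Hypothesis hm : (1 <= m)%nat.
Hypothesis ha : 0 <= a.
Hypothesis hu' : forall x, a < x -> Rbar_lt x b -> Derive u x <> 0.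

Lemma BG_minimal_rot_surface_iff (T Z : R -> R) :
  (forall s, a < s -> Rbar_lt s b ->
     ex_derive T s /\ ex_derive Z s /\ BG_profile m (Derive u s) (T s) (Z s)) ->
  BG_minimal m (rot_surface u) (fun s _ => a < s /\ Rbar_lt s b) <->
  forall s, a < s -> Rbar_lt s b -> Derive T s + T s / s = 0.
Proof.
intros hTZ.
assert (hloc : forall s, a < s -> Rbar_lt s b -> forall P : R -> Prop,
          (forall r, a < r -> Rbar_lt r b -> P r) -> locally s P)
  by (intros s h1 h2 P hP; apply locally_interval with a b; trivial).
assert (hH : forall s v, a < s -> Rbar_lt s b ->
  mean_curv_zero_at (rot_surface u) (rot_map T Z) s v <-> Derive T s + T s / s = 0).
{ intros s v h1 h2; destruct (hTZ s h1 h2) as [dT [dZ hp]].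
  apply mean_curv_zero_at_rot_map; auto; [lra|].
  apply (Derive_BG_profile m (Derive u s)); trivial.
  apply hloc; trivial; intros r r1 r2; apply hTZ; trivial. }
split.
- intros Hmin s h1 h2; apply (hH s 0 h1 h2), Hmin; [|split; trivial].
  intros r w [r1 r2]; apply (BG_point_rot_surface_of_profile m u hm); [lra|apply hTZ; trivial].
- intros hODE eta heta s v [h1 h2].
  apply mean_curv_zero_at_ext_loc with (rot_map T Z); [|apply hH; auto].
  apply hloc; trivial; intros r r1 r2 w.
  destruct (profile_of_BG_point_rot_surface m u hm r w (eta r w)) as [T' [Z' [-> hp]]];
    [lra|auto|apply heta; split; trivial|].
  destruct (BG_profile_unique m hm _ _ _ _ _ (proj2 (proj2 (hTZ r r1 r2))) hp) as [<- <-].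
  reflexivity.
Qed.

End Rotational_minimal.

(** * The profile integral *)

Definition root_2m (m : nat) (y : R) : R := Rpower y (/ INR (2 * m)).

Definition gap_root (m : nat) (k x : R) : R := root_2m m (x ^ (2 * m) - k ^ (2 * m)).

(* The substitution [rho ^ (2m) = r ^ (2m) + k ^ (2m)] turns the improper integral of
   [integrand m k] over [(k, x]] into the integral of [subst_integrand m k], which is bounded
   by [1], over [[0, gap_root m k x]]. *)
Definition subst_integrand (m : nat) (k r : R) : R :=
  Rpower (k ^ (2 * m) / (r ^ (2 * m) + k ^ (2 * m))) ((INR (2 * m) - 1) / INR (2 * m)).

Definition integrand_primitive (m : nat) (k x : R) : R :=
  RInt (subst_integrand m k) 0 (gap_root m k x).

Section Profile_integral.

Variable m : nat.
Hypothesis hm : (1 <= m)%nat.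

Local Notation conj_exp := ((INR (2 * m) - 1) / INR (2 * m)).

Let hn : 0 < INR (2 * m).
Proof. apply lt_0_INR; lia. Qed.

Lemma Rpower_pow_2m_conj y : 0 < y -> Rpower (y ^ (2 * m)) conj_exp = y ^ (2 * m - 1).
Proof.
intros hy; rewrite <- Rpower_pow, Rpower_mult, <- Rpower_pow by trivial; f_equal.
rewrite minus_INR by lia; simpl (INR 1); field; lra.
Qed.

Lemma root_2m_pos y : 0 < root_2m m y.
Proof. unfold root_2m, Rpower; apply exp_pos. Qed.

Lemma pow_root_2m y : 0 < y -> root_2m m y ^ (2 * m) = y.
Proof.
intros hy; unfold root_2m; rewrite <- Rpower_pow, Rpower_mult, Rinv_l by
  (unfold Rpower; first [apply exp_pos | lra]).
apply Rpower_1, hy.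
Qed.

Lemma pow_pred_root_2m y : 0 < y -> root_2m m y ^ (2 * m - 1) = Rpower y conj_exp.
Proof.
intros hy; rewrite <- Rpower_pow_2m_conj, pow_root_2m by (trivial; apply root_2m_pos).
reflexivity.
Qed.

Lemma gap_pos k x : 0 < k < x -> 0 < x ^ (2 * m) - k ^ (2 * m).
Proof.
intros hkx; replace (2 * m)%nat with (S (2 * m - 1)) by lia.
pose proof (pow_lt_compat_nonneg (2 * m - 1) k x); lra.
Qed.

Lemma integrand_eq k x : 0 < k < x ->
  integrand m k x = k ^ (2 * m - 1) / gap_root m k x ^ (2 * m - 1).
Proof.
intros hkx; unfold integrand, gap_root; rewrite pow_pred_root_2m by (apply gap_pos; trivial).
reflexivity.
Qed.

Lemma BG_profile_integrand sg k s : sg = 1 \/ sg = -1 -> 0 < k < s ->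
  BG_profile m (sg * integrand m k s) (- sg * k / s) (gap_root m k s / s).
Proof.
intros hsg hks; rewrite integrand_eq by trivial.
assert (hmsg : - sg = 1 \/ - sg = -1) by lra.
pose proof (gap_pos k s hks) as hgap; pose proof (root_2m_pos (s ^ (2 * m) - k ^ (2 * m))).
assert (hs : s <> 0) by lra.
unfold gap_root in *.
unfold Rdiv; split; [|split].
- rewrite !Rpow_mult_distr, pow_even_sign, pow_root_2m, pow_inv by trivial.
  field; apply pow_nonzero; trivial.
- replace (2 * m - 1)%nat with (2 * (m - 1) + 1)%nat by lia.
  rewrite !Rpow_mult_distr, !pow_inv, pow_odd_sign by trivial.
  field; split; apply pow_nonzero; lra.
- apply Rmult_lt_0_compat; [|apply Rinv_0_lt_compat]; lra.
Qed.

Lemma is_derive_gap_root k x : 0 < k < x ->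
  is_derive (gap_root m k) x (x ^ (2 * m - 1) / gap_root m k x ^ (2 * m - 1)).
Proof.
intros hkx; pose proof (gap_pos k x hkx) as hg.
assert (hd : is_derive (fun y => y ^ (2 * m) - k ^ (2 * m)) x (INR (2 * m) * x ^ (2 * m - 1)))
  by (rewrite Nat.sub_1_r; auto_derive; trivial;
      change (m + (m + 0))%nat with (2 * m)%nat; ring).
assert (hp : is_derive (fun z => Rpower z (/ INR (2 * m))) (x ^ (2 * m) - k ^ (2 * m))
  (/ INR (2 * m) * Rpower (x ^ (2 * m) - k ^ (2 * m)) (- conj_exp))).
{ replace (- conj_exp) with (/ INR (2 * m) - 1) by (field; lra).
  apply is_derive_Reals, derivable_pt_lim_power; trivial. }
unfold gap_root at 2; rewrite pow_pred_root_2m by trivial.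
replace (x ^ (2 * m - 1) / _) with (scal (INR (2 * m) * x ^ (2 * m - 1))
  (/ INR (2 * m) * Rpower (x ^ (2 * m) - k ^ (2 * m)) (- conj_exp))).
- exact (is_derive_comp (fun z => Rpower z (/ INR (2 * m)))
    (fun y => y ^ (2 * m) - k ^ (2 * m)) x _ _ hp hd).
- assert (0 < Rpower (x ^ (2 * m) - k ^ (2 * m)) conj_exp) by (unfold Rpower; apply exp_pos).
  rewrite Rpower_Ropp; unfold scal; simpl; unfold mult; simpl.
  change (m + (m + 0))%nat with (2 * m)%nat; field; lra.
Qed.

Lemma subst_integrand_gap_root k x : 0 < k < x ->
  subst_integrand m k (gap_root m k x) = (k / x) ^ (2 * m - 1).
Proof.
intros hkx; unfold subst_integrand, gap_root; rewrite pow_root_2m by (apply gap_pos; trivial).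
replace (x ^ (2 * m) - k ^ (2 * m) + k ^ (2 * m)) with (x ^ (2 * m)) by ring.
rewrite <- Rpower_pow_2m_conj by (trivial; apply Rdiv_lt_0_compat; lra).
unfold Rdiv; rewrite Rpow_mult_distr, pow_inv; reflexivity.
Qed.

Lemma continuous_subst_integrand k r : 0 < k -> continuous (subst_integrand m k) r.
Proof.
intros hk; pose proof (pow_even_nonneg m r); pose proof (pow_lt k (2 * m) hk).
apply (ex_derive_continuous (subst_integrand m k)); unfold subst_integrand, Rpower.
auto_derive; change (m + (m + 0))%nat with (2 * m)%nat.
repeat split; [|apply Rdiv_lt_0_compat]; lra.
Qed.

Lemma abs_subst_integrand_le_1 k r : 0 < k -> Rabs (subst_integrand m k r) <= 1.
Proof.
intros hk; pose proof (pow_even_nonneg m r); pose proof (pow_lt k (2 * m) hk).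
unfold subst_integrand; rewrite Rabs_pos_eq by (unfold Rpower; apply Rlt_le, exp_pos).
replace 1 with (Rpower 1 conj_exp) at 2
  by (unfold Rpower; rewrite ln_1, Rmult_0_r, exp_0; reflexivity).
apply Rle_Rpower_l.
- apply Rdiv_le_0_compat; [|trivial]; assert (1 <= INR (2 * m)) by (apply (le_INR 1); lia).
  lra.
- split; [apply Rdiv_lt_0_compat; lra|].
  apply Rmult_le_reg_r with (r ^ (2 * m) + k ^ (2 * m)); [lra|].
  field_simplify; lra.
Qed.

Lemma is_derive_integrand_primitive k x : 0 < k < x ->
  is_derive (integrand_primitive m k) x (integrand m k x).
Proof.
intros hkx.
assert (hI : is_derive (fun y => RInt (subst_integrand m k) 0 y) (gap_root m k x)
                       (subst_integrand m k (gap_root m k x))).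
{ apply (is_derive_RInt _ _ 0); [|apply continuous_subst_integrand; lra].
  apply filter_forall; intros y; apply RInt_correct, ex_RInt_continuous.
  intros; apply continuous_subst_integrand; lra. }
pose proof (is_derive_comp _ _ _ _ _ hI (is_derive_gap_root k x hkx)) as h.
rewrite subst_integrand_gap_root in h by trivial.
rewrite integrand_eq by trivial.
replace (k ^ (2 * m - 1) / _) with (scal (x ^ (2 * m - 1) / gap_root m k x ^ (2 * m - 1))
  ((k / x) ^ (2 * m - 1))); [exact h|].
assert (0 < x ^ (2 * m - 1)) by (apply pow_lt; lra).
assert (0 < gap_root m k x ^ (2 * m - 1)) by (apply pow_lt, root_2m_pos).
unfold scal; simpl; unfold mult; simpl; change (m + (m + 0))%nat with (2 * m)%nat.
unfold Rdiv; rewrite Rpow_mult_distr, pow_inv; field; split; lra.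
Qed.

Lemma continuous_integrand k x : 0 < k < x -> continuous (integrand m k) x.
Proof.
intros hkx; pose proof (gap_pos k x hkx).
apply (ex_derive_continuous (integrand m k)); unfold integrand, Rpower; auto_derive.
change (m + (m + 0))%nat with (2 * m)%nat; split; [lra|split; [|trivial]].
apply Rgt_not_eq, exp_pos.
Qed.

Lemma integrand_primitive_lim k : 0 < k ->
  filterlim (integrand_primitive m k) (at_right k) (locally 0).
Proof.
intros hk; apply filterlim_locally; intros eps.
assert (heps : 0 < eps ^ (2 * m)) by (apply pow_lt, cond_pos).
assert (hc : continuous (fun y => y ^ (2 * m) - k ^ (2 * m)) k)
  by (apply (ex_derive_continuous (fun y => y ^ (2 * m) - k ^ (2 * m))); auto_derive; trivial).
apply (proj1 (filterlim_locally _ _)) with (eps := mkposreal _ heps) in hc.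
unfold at_right, within; eapply filter_imp; [|exact hc]; intros y hy hky.
change (Rabs ((y ^ (2 * m) - k ^ (2 * m)) - (k ^ (2 * m) - k ^ (2 * m))) < eps ^ (2 * m))
  in hy.
change (Rabs (integrand_primitive m k y - 0) < eps); rewrite Rminus_0_r.
assert (hR : gap_root m k y < eps).
{ destruct (Rlt_le_dec (gap_root m k y) eps) as [|h]; trivial.
  pose proof (pow_incr eps (gap_root m k y) (2 * m) (conj (Rlt_le _ _ (cond_pos eps)) h)).
  unfold gap_root in *; rewrite pow_root_2m in * by (apply gap_pos; lra).
  apply Rabs_def2 in hy; lra. }
unfold integrand_primitive; eapply Rle_lt_trans.
- apply abs_RInt_le_const with (M := 1); [apply Rlt_le, root_2m_pos| |].
  + exact (ex_RInt_continuous _ _ _ (fun z _ => continuous_subst_integrand k z hk)).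
  + intros; apply abs_subst_integrand_le_1; trivial.
- lra.
Qed.

Lemma is_RInt_gen_integrand k x : 0 < k < x ->
  is_RInt_gen (integrand m k) (at_right k) (at_point x) (integrand_primitive m k x).
Proof.
intros hkx.
assert (hprod : forall P : R * R -> Prop, (forall y, k < y -> P (y, x)) ->
                  filter_prod (at_right k) (at_point x) P).
{ intros P hP; exists (fun y => k < y) (fun z => z = x).
  - unfold at_right, within; apply filter_forall; auto.
  - reflexivity.
  - intros y z hy ->; auto. }
assert (hin : forall y t, k < y -> Rmin y x <= t -> k < t)
  by (intros y t hy ht; apply Rlt_le_trans with (Rmin y x); [apply Rmin_glb_lt; lra|trivial]).
assert (hD : forall t, k < t -> Derive (integrand_primitive m k) t = integrand m k t)
  by (intros t ht; apply is_derive_unique, is_derive_integrand_primitive; lra).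
apply is_RInt_gen_ext with (Derive (integrand_primitive m k)).
{ apply hprod; intros y hy t [ht _]; simpl in ht; apply hD, (hin y); lra. }
rewrite <- (Rminus_0_r (integrand_primitive m k x)).
apply is_RInt_gen_Derive.
- apply hprod; intros y hy t [ht _]; eexists; apply is_derive_integrand_primitive.
  split; [lra|apply (hin y); trivial].
- apply hprod; intros y hy t [ht _]; pose proof (hin y t hy ht) as hkt.
  apply continuous_ext_loc with (integrand m k); [|apply continuous_integrand; lra].
  apply (locally_interval _ t k p_infty hkt I); intros z hz _; symmetry; apply hD, hz.
- apply integrand_primitive_lim; lra.
- intros P hP; apply locally_singleton in hP; exact hP.
Qed.

End Profile_integral.

(** * Integrating the minimality equation *)

Lemma interval_nonempty (a : R) (b : Rbar) : Rbar_lt a b -> exists x, a < x /\ Rbar_lt x b.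
Proof.
destruct b as [b| |]; simpl; intros hab; [exists ((a + b) / 2)|exists (a + 1)|];
  simpl; try split; lra || tauto.
Qed.

Lemma const_of_is_derive_0 (a : R) (b : Rbar) (h : R -> R) :
  (forall x, a < x -> Rbar_lt x b -> is_derive h x 0) ->
  forall x y, a < x -> Rbar_lt x b -> a < y -> Rbar_lt y b -> h x = h y.
Proof.
intros hd x y hx hxb hy hyb.
assert (hin : forall c, Rmin x y <= c <= Rmax x y -> a < c /\ Rbar_lt c b).
{ intros c [h1 h2]; split.
  - apply Rlt_le_trans with (Rmin x y); [apply Rmin_glb_lt|]; trivial.
  - apply Rbar_le_lt_trans with (Rmax x y); [exact h2|].
    unfold Rmax; destruct (Rle_dec x y); trivial. }
destruct (MVT_gen h x y (fun _ => 0)) as [c [_ hc]]; [| |lra].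
- intros z hz; apply hd; apply hin; lra.
- intros z hz; apply continuity_pt_filterlim, (ex_derive_continuous h).
  exists 0; apply hd; apply hin; trivial.
Qed.

Lemma eq_inverse_of_ODE (a : R) (b : Rbar) (T : R -> R) : 0 <= a -> Rbar_lt a b ->
  (forall s, a < s -> Rbar_lt s b -> ex_derive T s /\ Derive T s + T s / s = 0) ->
  exists C, forall s, a < s -> Rbar_lt s b -> T s = C / s.
Proof.
intros ha hab hT; destruct (interval_nonempty a b hab) as [x0 [h1 h2]].
exists (x0 * T x0); intros s hs1 hs2.
enough (hsT : s * T s = x0 * T x0) by (rewrite <- hsT; field; lra).
apply (const_of_is_derive_0 a b (fun r => r * T r)); trivial.
intros r hr1 hr2; destruct (hT r hr1 hr2) as [hdT hODE].
auto_derive; trivial; change (fun x => T x) with T.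
rewrite <- (Rmult_0_r r), <- hODE; field; lra.
Qed.

Lemma inverse_solves_ODE C s : 0 < s ->
  ex_derive (fun r => C / r) s /\ Derive (fun r => C / r) s + C / s / s = 0.
Proof.
intros hs; assert (hd : is_derive (fun r : R => C / r) s (- C / s ^ 2))
  by (auto_derive; [lra|field; lra]).
split; [eexists; exact hd|rewrite (is_derive_unique _ _ _ hd); field; lra].
Qed.

Section Profile_ODE.

Variables (m : nat) (a : R) (b : Rbar) (u : R -> R).
Hypothesis hm : (1 <= m)%nat.
Hypothesis ha : 0 <= a.
Hypothesis hab : Rbar_lt a b.
Hypothesis hu' : forall x, a < x -> Rbar_lt x b -> Derive u x <> 0.

Lemma slope_of_profile_ODE (T Z : R -> R) :
  (forall s, a < s -> Rbar_lt s b -> ex_derive T s /\ BG_profile m (Derive u s) (T s) (Z s)) ->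
  (forall s, a < s -> Rbar_lt s b -> Derive T s + T s / s = 0) ->
  exists k sg, 0 < k /\ (sg = 1 \/ sg = -1) /\
    forall s, a < s -> Rbar_lt s b -> k < s /\ Derive u s = sg * integrand m k s.
Proof.
intros hTZ hODE.
destruct (eq_inverse_of_ODE a b T ha hab) as [C hC].
{ intros s h1 h2; split; [apply hTZ|apply hODE]; trivial. }
destruct (interval_nonempty a b hab) as [x0 [h1 h2]].
assert (hC0 : C <> 0).
{ intros ->; destruct (hTZ x0 h1 h2) as [_ hprof].
  apply (BG_profile_T_neq_0 m hm _ _ _ (hu' x0 h1 h2) hprof).
  rewrite (hC x0 h1 h2); unfold Rdiv; ring. }
set (sg := if Rlt_dec 0 C then -1 else 1).
assert (hsg : sg = 1 \/ sg = -1) by (unfold sg; destruct Rlt_dec; auto).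
assert (hCsg : C = - sg * Rabs C)
  by (unfold sg; destruct Rlt_dec; [rewrite Rabs_pos_eq|rewrite Rabs_left]; lra).
exists (Rabs C), sg; split; [apply Rabs_pos_lt; trivial|split; trivial].
intros s hs1 hs2; destruct (hTZ s hs1 hs2) as [_ hprof].
assert (hs : 0 < s) by lra.
assert (hks : Rabs C < s).
{ pose proof (BG_profile_abs_T_lt_1 m _ _ _ hprof) as hT1.
  rewrite (hC s hs1 hs2), Rabs_div, (Rabs_pos_eq s) in hT1 by lra.
  apply Rmult_lt_reg_r with (/ s); [apply Rinv_0_lt_compat; lra|].
  rewrite Rinv_r; lra. }
split; trivial.
apply (BG_profile_slope_unique m hm _ _ (T s) (Z s) (gap_root m (Rabs C) s / s)); trivial.
replace (T s) with (- sg * Rabs C / s)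
  by (rewrite (hC s hs1 hs2); rewrite hCsg at 2; reflexivity).
apply BG_profile_integrand; auto.
split; trivial; apply Rabs_pos_lt; trivial.
Qed.

Lemma profile_integral_of_slope k sg : 0 < k ->
  (forall s, a < s -> Rbar_lt s b ->
     k < s /\ ex_derive u s /\ Derive u s = sg * integrand m k s) ->
  exists k3, forall x, a < x -> Rbar_lt x b ->
    exists I, is_RInt_gen (integrand m k) (at_right k) (at_point x) I /\ u x = sg * I + k3.
Proof.
intros hk hslope; destruct (interval_nonempty a b hab) as [x0 [h1 h2]].
exists (u x0 - sg * integrand_primitive m k x0); intros x hx1 hx2.
exists (integrand_primitive m k x); split;
  [apply is_RInt_gen_integrand; trivial; split; [|apply hslope]; trivial|].
enough (hc : u x - sg * integrand_primitive m k x = u x0 - sg * integrand_primitive m k x0)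
  by lra.
apply (const_of_is_derive_0 a b (fun r => u r - sg * integrand_primitive m k r)); trivial.
intros r hr1 hr2; destruct (hslope r hr1 hr2) as [hkr [hdu hdu_eq]].
replace 0 with (Derive u r - sg * integrand m k r) by (rewrite hdu_eq; ring).
apply (is_derive_minus u); [apply Derive_correct, hdu|].
apply is_derive_scal, is_derive_integrand_primitive; trivial; lra.
Qed.

Lemma slope_of_profile_integral k k3 sg : 0 < k ->
  (forall x, a < x -> Rbar_lt x b -> k < x) ->
  (forall x, a < x -> Rbar_lt x b ->
    exists I, is_RInt_gen (integrand m k) (at_right k) (at_point x) I /\ u x = sg * I + k3) ->
  forall s, a < s -> Rbar_lt s b -> Derive u s = sg * integrand m k s.
Proof.
intros hk hks hI.
assert (hu : forall x, a < x -> Rbar_lt x b -> u x = sg * integrand_primitive m k x + k3).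
{ intros x h1 h2; destruct (hI x h1 h2) as [I [hIx ->]].
  pose proof (is_RInt_gen_integrand m hm k x (conj hk (hks x h1 h2))) as hP.
  rewrite <- (is_RInt_gen_unique (V := R_CompleteNormedModule) _ _ hIx),
    (is_RInt_gen_unique (V := R_CompleteNormedModule) _ _ hP); reflexivity. }
intros s h1 h2; apply is_derive_unique.
apply is_derive_ext_loc with (fun r => sg * integrand_primitive m k r + k3).
- apply locally_interval with a b; trivial; intros r r1 r2; symmetry; apply hu; trivial.
- assert (hP := is_derive_integrand_primitive m hm k s (conj hk (hks s h1 h2))).
  auto_derive; [eexists; exact hP|].
  change (fun x => integrand_primitive m k x) with (integrand_primitive m k).
  rewrite (is_derive_unique _ _ _ hP); ring.
Qed.

End Profile_ODE.

Theorem theorem4p1 (m : nat) (hm : (2 <= m)%nat)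
  (a : R) (b : Rbar) (ha : 0 <= a) (hab : Rbar_lt a b)
  (u : R -> R)
  (hsmooth : forall (n : nat) (x : R), a < x -> Rbar_lt x b -> ex_derive_n u n x)
  (hu' : forall x : R, a < x -> Rbar_lt x b -> Derive u x <> 0) :
  BG_minimal m (rot_surface u) (fun s _ => a < s /\ Rbar_lt s b)
  <->
  exists (k2 k3 sigma : R),
    0 < k2 /\ (sigma = 1 \/ sigma = -1) /\
    (forall x : R, a < x -> Rbar_lt x b -> k2 < x) /\
    (forall x : R, a < x -> Rbar_lt x b ->
       exists I : R,
         is_RInt_gen (integrand m k2) (at_right k2) (at_point x) I /\
         u x = sigma * I + k3).
Proof.
assert (hm1 : (1 <= m)%nat) by lia.
set (T0 := fun r => BG_T m (Derive u r)); set (Z0 := fun r => BG_Z m (Derive u r)).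
assert (hBG : forall s, a < s -> Rbar_lt s b ->
  ex_derive T0 s /\ ex_derive Z0 s /\ BG_profile m (Derive u s) (T0 s) (Z0 s)).
{ intros s h1 h2; destruct (ex_derive_BG_TZ m _ (hu' s h1 h2)) as [dT dZ].
  assert (hddu : ex_derive (Derive u) s) by exact (hsmooth 2%nat s h1 h2).
  split; [|split]; [apply (ex_derive_comp _ _ s dT hddu)|apply (ex_derive_comp _ _ s dZ hddu)|].
  apply BG_profile_BG_TZ; auto. }
split.
- intros Hmin.
  pose proof (proj1 (BG_minimal_rot_surface_iff m a b u hm1 ha hu' _ _ hBG) Hmin) as hODE.
  destruct (slope_of_profile_ODE m a b u hm1 ha hab hu' T0 Z0) as [k [sg [hk [hsg hslope]]]];
    [intros s h1 h2; split; apply hBG; trivial|exact hODE|].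
  destruct (profile_integral_of_slope m a b u hm1 hab k sg hk) as [k3 hk3].
  { intros s h1 h2; repeat split; [apply hslope|apply (hsmooth 1%nat)|apply hslope]; trivial. }
  exists k, k3, sg; repeat split; trivial; apply hslope.
- intros [k [k3 [sg [hk [hsg [hks hI]]]]]].
  assert (hslope := slope_of_profile_integral m a b u hm1 k k3 sg hk hks hI).
  apply (BG_minimal_rot_surface_iff m a b u hm1 ha hu' (fun s => - sg * k / s)
    (fun s => gap_root m k s / s)).
  + intros s h1 h2; pose proof (hks s h1 h2); rewrite hslope by trivial.
    split; [|split]; [apply inverse_solves_ODE; lra| |apply BG_profile_integrand; auto].
    apply ex_derive_div; [eexists; apply is_derive_gap_root|apply ex_derive_id|]; auto; lra.
  + intros s h1 h2; apply inverse_solves_ODE; lra.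
Qed.
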